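(* Let $P$ be a quasi-lattice ordered subsemigroup of a discrete group $Q$ and let $(X,P,T)$ be a directed locally compact semigroup action. Let $\Lambda=X*P$ be the topological $P$-graph of the action, with path space $\Omega$, boundary path space $\partial\Omega$ and shift $T$. Then there is a homeomorphism $J:X\to\partial\Omega$ which is $P$-equivariant (for all $(x,m)\in X*P$, $J(x)\cdot m\neq\emptyset$ and $J(x\cdot m)=J(x)\cdot m$) and which implements a groupoid isomorphism $(x,q,y)\mapsto(J(x),q,J(y))$ of $G(X,P,T)$ onto $G(\partial\Omega,P,T)$.
   Context: Partial action: $X*P\subset X\times P$, $(x,m)\mapsto x\cdot m$, $x\cdot e=x$, $(x,mn)\in X*P$ iff $(x,m),(x\cdot m,n)\in X*P$, then $(x\cdot m)\cdot n=x\cdot(mn)$; $U(m)=\{x:(x,m)\in X*P\}$, $m\le n$ iff $n=mp$. Directed: $U(m)\cap U(n)\neq\emptyset$ implies there is $r\ge m,n$ with $U(m)\cap U(n)=U(r)$. Locally compact: $X$ locally compact Hausdorff, $U(m),V(m)=\{x\cdot m\}$ open, $x\mapsto x\cdot m$ a local homeomorphism $U(m)\to V(m)$. Quasi-lattice ordered: $P\cap P^{-1}=\{e\}$ and two elements with a common upper bound have a least upper bound. The graph of the action is $\Lambda=X*P$ (topology from $X\times P$) with $\Lambda^{(0)}=X$, $r(x,n)=x$, $s(x,n)=x\cdot n$, $d(x,n)=n$, $(x,m)(x\cdot m,n)=(x,mn)$. For $\mu,\lambda\in\Lambda$, $\mu\le\lambda$ iff $\lambda=\mu\nu$. $\Omega$: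 nonempty closed hereditary (closed under $\le$-predecessors) directed (any two elements have a common upper bound inside) subsets of $\Lambda$, with the relative Fell topology; $A\cdot n=\{\nu:\exists\mu\in\Lambda^n,\mu\nu\in A\}$ where $\Lambda^n=d^{-1}(n)$. $E\subset\Lambda$ exhaustive: for each $\lambda$ with $r(\lambda)\in r(E)$ there is $\mu\in E$ such that $\lambda,\mu$ have a common upper bound; $\lambda\in A$ extendable in $A$: for every compact exhaustive $E$ with $r(E)$ a neighborhood of $s(\lambda)$ some $\mu\in E$ has $\lambda\mu\in A$; $\partial\Omega$: those $A\in\Omega$ all of whose elements are extendable in $A$. For a partial action $(Y,P,S)$ (here $Y=X$ or $Y=\partial\Omega$ with $A\mapsto A\cdot n$ defined when $A\cdot n\ne\emptyset$), $G(Y,P,S)=\{(x,q,y)\in Y\times Q\times Y:\exists m,n,\ q=mn^{-1},\ x\in U(m), y\in U(n), x\cdot m=y\cdot n\}$ with $(x,q,y)(y,q',z)=(x,qq',z)$, $(x,q,y)^{-1}=(y,q^{-1},x)$ and topology with basis $Z(U,m,n,V)=\{(x,mn^{-1},y):x\in U,y\in V,x\cdot m=y\cdot n\}$. *)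

From HB Require Import structures.
From mathcomp Require Import all_boot all_order all_algebra.
From mathcomp Require Import all_classical all_reals all_analysis.
Set Implicit Arguments. Unset Strict Implicit. Unset Printing Implicit Defensive.
Local Open Scope classical_set_scope.

Section GroupDefs.
Variables (Q : Type) (mul : Q -> Q -> Q) (inv : Q -> Q) (e : Q).

Definition is_group : Prop :=
  (forall a b c, mul a (mul b c) = mul (mul a b) c) /\
  (forall a, mul e a = a /\ mul a e = a) /\
  (forall a, mul (inv a) a = e /\ mul a (inv a) = e).

Variable P : set Q.

Definition is_submonoid : Prop :=
  P e /\ (forall m n, P m -> P n -> P (mul m n)).

Definition ple (m n : Q) : Prop := exists p, P p /\ n = mul m p.

Definition quasi_lattice_ordered : Prop :=
  (forall p, P p -> P (inv p) -> p = e) /\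
  (forall m n, P m -> P n -> (exists u, P u /\ ple m u /\ ple n u) ->
     exists l, P l /\ ple m l /\ ple n l /\
       forall u, P u -> ple m u -> ple n u -> ple l u).
End GroupDefs.

Section PartialAction.
Variables (Q : Type) (mul : Q -> Q -> Q) (e : Q) (P : set Q).
Variables (Y : Type) (dom : Y -> Q -> Prop) (act : Y -> Q -> Y).
(* dom x m  means  (x,m) \in X*P ;  act x m  is  x . m  *)

Definition is_partial_action : Prop :=
  (forall y m, dom y m -> P m) /\
  (forall y, dom y e /\ act y e = y) /\
  (forall y m n, P m -> P n ->
     (dom y (mul m n) <-> dom y m /\ dom (act y m) n)) /\
  (forall y m n, P m -> P n -> dom y m -> dom (act y m) n ->
     act (act y m) n = act y (mul m n)).

Definition Udom (m : Q) : set Y := [set y | dom y m].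
Definition Vim (m : Q) : set Y := (fun y => act y m) @` Udom m.

Definition directed_action : Prop :=
  forall m n, P m -> P n -> Udom m `&` Udom n !=set0 ->
    exists r, P r /\ ple mul P m r /\ ple mul P n r /\
      Udom m `&` Udom n = Udom r.
End PartialAction.

Section LocHomeo.
Variable X : topologicalType.
Definition local_homeo (U V : set X) (f : X -> X) : Prop :=
  f @` U = V /\
  forall x, U x -> exists W, open W /\ W x /\ W `<=` U /\
    {in W &, injective f} /\ {within W, continuous f} /\
    (forall W', open W' -> W' `<=` W -> open (f @` W')).
End LocHomeo.

Definition locally_compact_action (X : topologicalType) (Q : Type) (P : set Q)
  (dom : X -> Q -> Prop) (act : X -> Q -> X) : Prop :=
  hausdorff_space X /\ locally_compact [set: X] /\
  forall m, P m -> open (Udom dom m) /\ open (Vim dom act m) /\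
    local_homeo (Udom dom m) (Vim dom act m) (fun x => act x m).

Section Groupoid.
Variables (Q : Type) (mul : Q -> Q -> Q) (inv : Q -> Q) (P : set Q).
Variables (Y : Type) (Y0 : set Y) (dom : Y -> Q -> Prop) (act : Y -> Q -> Y).
(* openY : the open subsets of the unit space Y0 (relative topology) *)
Variable openY : set Y -> Prop.

Definition Gset : set (Y * Q * Y) :=
  [set g | let '(x, q, y) := g in Y0 x /\ Y0 y /\
     exists m n, P m /\ P n /\ q = mul m (inv n) /\ dom x m /\ dom y n /\
       act x m = act y n].

Definition Zbasic (U : set Y) (m n : Q) (V : set Y) : set (Y * Q * Y) :=
  [set g | let '(x, q, y) := g in U x /\ V y /\ q = mul m (inv n) /\
     dom x m /\ dom y n /\ act x m = act y n].

Definition Gopen (W : set (Y * Q * Y)) : Prop :=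
  W `<=` Gset /\
  forall g, W g -> exists U V m n, openY U /\ openY V /\ P m /\ P n /\
    Zbasic U m n V g /\ Zbasic U m n V `<=` W.

Definition gmul (g h : Y * Q * Y) : Y * Q * Y :=
  let '(x, q, _) := g in let '(_, q', z) := h in (x, mul q q', z).
Definition ginv (g : Y * Q * Y) : Y * Q * Y :=
  let '(x, q, y) := g in (y, inv q, x).
End Groupoid.

Section PGraph.
Variables (X : topologicalType) (Q : choiceType) (mul : Q -> Q -> Q) (P : set Q).
Variables (dom : X -> Q -> Prop) (act : X -> Q -> X).

Definition LT := (X * discrete_topology Q)%type.

Definition Lam : set LT := [set l | P l.2 /\ dom l.1 l.2].
Definition lrg (l : LT) : X := l.1.
Definition lsrc (l : LT) : X := act l.1 l.2.
Definition ldg (l : LT) : Q := l.2.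
(* (x,m)(x.m,n) = (x,mn) *)
Definition lcomp (l k : LT) : LT := (l.1, mul l.2 k.2).

Definition lle (mu lam : LT) : Prop :=
  Lam mu /\ Lam lam /\ exists nu, Lam nu /\ lsrc mu = lrg nu /\ lam = lcomp mu nu.

Definition Lam_closed (A : set LT) : Prop :=
  A `<=` Lam /\ exists C : set LT, closed C /\ A = C `&` Lam.
Definition hereditary (A : set LT) : Prop :=
  forall mu lam, A lam -> lle mu lam -> A mu.
Definition directed_set (A : set LT) : Prop :=
  forall l1 l2, A l1 -> A l2 -> exists l, A l /\ lle l1 l /\ lle l2 l.

Definition Omega : set (set LT) :=
  [set A | A !=set0 /\ Lam_closed A /\ hereditary A /\ directed_set A].

(* Fell topology on subsets of Lambda: subbasis *)
Definition fell_sub (S : set (set LT)) : Prop :=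
  (exists K : set LT, K `<=` Lam /\ compact K /\ S = [set A | A `&` K = set0]) \/
  (exists O : set LT, open O /\ S = [set A | A `&` (O `&` Lam) !=set0]).

Definition fell_open (W : set (set LT)) : Prop :=
  forall A, W A -> exists (n : nat) (f : nat -> set (set LT)),
    (forall i, (i < n)%N -> fell_sub (f i)) /\
    (forall i, (i < n)%N -> f i A) /\
    (forall B, (forall i, (i < n)%N -> f i B) -> W B).

Definition exhaustive (E : set LT) : Prop :=
  E `<=` Lam /\
  forall lam, Lam lam -> (lrg @` E) (lrg lam) ->
    exists mu, E mu /\ exists nu, lle lam nu /\ lle mu nu.

Definition extendable (lam : LT) (A : set LT) : Prop :=
  forall E : set LT, compact E -> exhaustive E -> nbhs (lsrc lam) (lrg @` E) ->
    exists mu, E mu /\ lsrc lam = lrg mu /\ A (lcomp lam mu).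

Definition Bdry : set (set LT) :=
  [set A | Omega A /\ forall lam, A lam -> extendable lam A].

Definition bdry_open (W : set (set LT)) : Prop :=
  W `<=` Bdry /\ exists O, fell_open O /\ W = O `&` Bdry.

Definition pshift (A : set LT) (n : Q) : set LT :=
  [set nu | Lam nu /\ exists mu, Lam mu /\ ldg mu = n /\ lsrc mu = lrg nu /\
     A (lcomp mu nu)].

Definition bdom (A : set LT) (n : Q) : Prop := Bdry A /\ P n /\ pshift A n !=set0.
End PGraph.

(** The homeomorphism sends x to the set J x of all paths (x, m) of the graph
    starting at x.  Since the range map is constant along extensions, every
    boundary path is contained in J x for x the range of any of its elements;
    conversely every (x, m) lies in it, because the compact set K * {m}, K a
    compact neighbourhood of x inside U(m), is exhaustive and (x, e) is
    extendable.  Shifting J x by m gives J (x . m), so J transports the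
    domains, the actions and the basic open sets Z(U, m, n, V) of G(X, P, T)
    to those of G(dOmega, P, T). *)
From HB Require Import structures.
From mathcomp Require Import all_boot all_order all_algebra.
From mathcomp Require Import all_classical all_reals all_analysis.
Local Open Scope classical_set_scope.
Set Implicit Arguments. Unset Strict Implicit.

Section ProductTopology.
Variables (X : topologicalType) (Q : choiceType).

Lemma continuous_LT_fst : continuous (fun l : LT X Q => l.1).
Proof. by move=> l; exact: cvg_fst. Qed.

Lemma continuous_LT_pair (m : Q) : continuous (fun y : X => ((y, m) : LT X Q)).
Proof.
move=> y; exact: (@cvg_pair X X (discrete_topology Q) (nbhs y) (nbhs y)
  (nbhs (m : discrete_topology Q)) _ _ _ id (fun=> m) cvg_id (cvg_cst _)).
Qed.

End ProductTopology.

Lemma compact_nbhs_sub (X : topologicalType) :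
  hausdorff_space X -> locally_compact [set: X] ->
  forall (x : X) (U : set X), open U -> U x ->
  exists K, compact K /\ nbhs x K /\ K `<=` U.
Proof.
move=> hX hLC x U oU Ux.
have := hLC x I; rewrite withinET => -[K0 K0x [cK0 _]].
have [C Cx CU] := compact_regular hX cK0 K0x (open_nbhs_nbhs (conj oU Ux)).
exists (K0 `&` closure C); split.
  by apply: compact_closedI => //; exact: closed_closure.
split; last by move=> y [_ /CU].
by apply: filterI => //; apply: filterS Cx; exact: subset_closure.
Qed.

Section PathsFrom.
Variables (Q : choiceType) (mul : Q -> Q -> Q) (inv : Q -> Q) (e : Q).
Hypothesis mul1q : left_id e mul.
Variable P : set Q.
Hypothesis hP : is_submonoid mul e P.
Variables (X : topologicalType) (dom : X -> Q -> Prop) (act : X -> Q -> X).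
Hypothesis hact : is_partial_action mul e P dom act.
Hypothesis hdir : directed_action mul P dom.
Hypothesis hlc : locally_compact_action P dom act.

Local Notation Lam := (Lam P dom).
Local Notation lle := (lle mul P dom act).
Local Notation Bdry := (Bdry mul P dom act).
Local Notation pshift := (pshift mul P dom act).
Local Notation bdom := (bdom mul P dom act).

Let Pe : P e. Proof. by case: hP. Qed.
Let Pmul m n : P m -> P n -> P (mul m n). Proof. by case: hP => _; apply. Qed.
Let domP y m : dom y m -> P m. Proof. by case: hact => H _; apply: H. Qed.
Let dom_e y : dom y e. Proof. by case: hact => _ [/(_ y) []]. Qed.
Let act_e y : act y e = y. Proof. by case: hact => _ [/(_ y) []]. Qed.
Let dom_mul y m n : P m -> P n ->
  (dom y (mul m n) <-> dom y m /\ dom (act y m) n).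
Proof. by case: hact => _ [_ [H _]]; apply: H. Qed.
Let hX : hausdorff_space X. Proof. by case: hlc. Qed.
Let hLC : locally_compact [set: X]. Proof. by case: hlc => _ []. Qed.
Let Udom_open m : P m -> open (Udom dom m).
Proof. by case: hlc => _ [_ /(_ m) H] /H []. Qed.

Definition paths_from (x : X) : set (LT X Q) := [set l | Lam l /\ l.1 = x].

Lemma paths_from_e x : paths_from x (x, e).
Proof. by split => //; split. Qed.

Lemma lle_fst mu lam : lle mu lam -> lam.1 = mu.1.
Proof. by case=> _ [_ [nu [_ [_ ->]]]]. Qed.

Lemma lle_extend y m p : dom y (mul m p) -> P m -> P p ->
  lle (y, m) (y, mul m p).
Proof.
move=> dmp Pm Pp; have [dm dp] := proj1 (dom_mul y Pm Pp) dmp.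
do 2 (split; first by split => //; exact: Pmul).
by exists (act y m, p).
Qed.

Lemma lle_common_upper y m n : dom y m -> dom y n ->
  exists r, dom y r /\ lle (y, m) (y, r) /\ lle (y, n) (y, r).
Proof.
move=> dm dn.
have [r [_ [[p [Pp ->]] [[p' [Pp' Er]] EU]]]] :=
  hdir (domP dm) (domP dn) (ex_intro _ y (conj dm dn)).
have dr : dom y (mul m p) by have : Udom dom (mul m p) y by rewrite -EU.
exists (mul m p); split => //; split; first exact: lle_extend (domP dm) Pp.
by rewrite Er; apply: lle_extend (domP dn) Pp'; rewrite -Er.
Qed.

Lemma paths_from_Omega x : Omega mul P dom act (paths_from x).
Proof.
split; first by exists (x, e); exact: paths_from_e.
split.
  split; first by move=> l [].
  exists ((fun l : LT X Q => l.1) @^-1` [set x]); split.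
    move/continuous_closedP: (@continuous_LT_fst X Q); apply.
    exact/accessible_closed_set1/hausdorff_accessible.
  by apply/seteqP; split=> l; [case=> La <-; split | case=> /= <- La].
split.
  by move=> mu lam [_ lx] H; split; [case: H | rewrite -(lle_fst H)].
move=> [y1 m1] [y2 m2] [[_ d1] /= E1] [[_ d2] /= E2]; subst y1 y2.
have [r [dr [l1 l2]]] := lle_common_upper d1 d2.
by exists (x, r); do 3 (split => //); exact: domP dr.
Qed.

(* Only the exhaustiveness of E at the trivial path (s lam, e) is used. *)
Lemma paths_from_extendable x lam : paths_from x lam ->
  extendable mul P dom act lam (paths_from x).
Proof.
move=> [[Pl dl] lx] E _ [EL exh] nE.
have Le : Lam ((lsrc act lam, e) : LT X Q) by [].
have [mu [Emu [nu [l1 l2]]]] := exh _ Le (nbhs_singleton nE).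
have mu1 : mu.1 = lsrc act lam by rewrite -(lle_fst l2) (lle_fst l1).
have [Pmu dmu] := EL _ Emu.
exists mu; split => //; split; first by rewrite /lrg mu1.
split=> //=; split=> /=; first exact: Pmul.
by apply/(dom_mul _ Pl Pmu); rewrite -[act _ _]/(lsrc act lam) -mu1.
Qed.

Lemma paths_from_bdry x : Bdry (paths_from x).
Proof.
split; first exact: paths_from_Omega.
by move=> lam; exact: paths_from_extendable.
Qed.

Lemma paths_from_inj : injective paths_from.
Proof. by move=> x y Exy; have := paths_from_e x; rewrite Exy => -[]. Qed.

Lemma Omega_sub_paths_from A a : Omega mul P dom act A -> A a ->
  A `<=` paths_from a.1 /\ A (a.1, e).
Proof.
case=> _ [[AL _] [her dirA]] Aa; split.
  move=> l Al; split; first exact: AL.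
  have [l' [_ [h1 h2]]] := dirA _ _ Aa Al.
  by rewrite -(lle_fst h2) (lle_fst h1).
apply: (her _ _ Aa); case: a Aa => y m /AL [Pm dm].
by have := @lle_extend y e m; rewrite mul1q; apply.
Qed.

Lemma bdry_paths_from A : Bdry A -> exists x, paths_from x = A.
Proof.
case=> OA ext; have [[a Aa] _] := OA.
have [sub Ae] := Omega_sub_paths_from OA Aa.
exists a.1; apply/seteqP; split => //.
move=> [y m] [[Pm dm] /= ey]; subst y.
have [K [cK [nK KU]]] := compact_nbhs_sub hX hLC (Udom_open Pm) dm.
pose E := [set ((y, m) : LT X Q) | y in K].
have cE : compact E.
  apply: continuous_compact => //; apply: continuous_subspaceT.
  exact: continuous_LT_pair.
have exE : exhaustive mul P dom act E.
  split; first by move=> _ [z Kz <-]; split => //; exact: KU.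
  move=> [z n] [_ dn] [_ [z' Kz' <-] /= ez]; subst z'.
  have [r [dr [l1 l2]]] := lle_common_upper dn (KU _ Kz').
  by exists (z, m); split; [exists z | exists (z, r)].
have nE : nbhs (lsrc act ((a.1, e) : LT X Q)) (@lrg X Q @` E).
  rewrite /lsrc /= act_e; apply: filterS nK => y Ky.
  by exists (y, m) => //; exists y.
have [_ [[z _ <-] [_]]] := ext _ Ae E cE exE nE.
by rewrite /lcomp /= mul1q.
Qed.

Lemma image_preimage_paths_from (U : set (set (LT X Q))) :
  U `<=` Bdry -> paths_from @` (paths_from @^-1` U) = U.
Proof.
move=> UB; apply/seteqP; split; first by move=> _ [z Uz <-].
by move=> A UA; have [z ez] := bdry_paths_from (UB A UA); exists z; rewrite //= ez.
Qed.

Lemma pshift_paths_from x m : dom x m -> pshift (paths_from x) m = paths_from (act x m).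
Proof.
move=> dm; apply/seteqP; split.
  by move=> nu [Lnu [[x' m'] [_ [/= em [/= snu [_ /= ex]]]]]]; subst.
move=> [y n] [[Pn dn] /= ey]; split; first by [].
exists (x, m); split; first by split => //; exact: domP dm.
do 2 (split => //).
split=> //=; split=> /=; first by apply: Pmul => //; exact: domP dm.
by apply/(dom_mul x (domP dm) Pn); rewrite -ey.
Qed.

Lemma bdom_paths_from x m : bdom (paths_from x) m <-> dom x m.
Proof.
split; first by case=> _ [_ [_ [_ [[x' m'] [[_ dm] [/= em [_ [_ /= ex]]]]]]]]; subst.
move=> dm; split; first exact: paths_from_bdry.
split; first exact: domP dm.
by rewrite pshift_paths_from //; exists (act x m, e); exact: paths_from_e.
Qed.

Lemma paths_from_match x y m n :
  [/\ bdom (paths_from x) m, bdom (paths_from y) n &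
      pshift (paths_from x) m = pshift (paths_from y) n] <->
  [/\ dom x m, dom y n & act x m = act y n].
Proof.
split.
  case=> /bdom_paths_from dm /bdom_paths_from dn.
  by rewrite !pshift_paths_from // => /paths_from_inj.
case=> dm dn E; split; try exact/bdom_paths_from.
by rewrite !pshift_paths_from // E.
Qed.

Lemma fell_sub_nbhs S x : fell_sub P dom S -> S (paths_from x) ->
  nbhs x [set y | S (paths_from y)].
Proof.
case=> [[K [KL [cK ->]]] | [G [oG ->]]] /= H.
  pose F := (fun l : LT X Q => l.1) @` K.
  have clF : closed F.
    apply: compact_closed hX _; apply: continuous_compact => //.
    by apply: continuous_subspaceT; exact: continuous_LT_fst.
  have nF : nbhs x (~` F).
    apply: open_nbhs_nbhs; split; first exact: closed_openC.
    move=> [l Kl lx].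
    have : (paths_from x `&` K) l by split => //; split => //; exact: KL.
    by rewrite H.
  apply: filterS nF => y nFy.
  by apply/seteqP; split => // l [[_ ly] Kl]; apply: nFy; exists l.
case: H => [[y m] [[[Pm dm] /= <-] [Gm _]]].
pose N := (fun z => ((z, m) : LT X Q)) @^-1` G `&` Udom dom m.
have nN : nbhs y N.
  apply: open_nbhs_nbhs; split => //; apply: openI; last exact: Udom_open.
  by apply: open_comp => // z _; exact: continuous_LT_pair.
apply: filterS nN => z [Gz dz].
by exists (z, m); split; [split | split] => //; split.
Qed.

Lemma fell_open_nbhs G x : fell_open P dom G -> G (paths_from x) ->
  nbhs x [set y | G (paths_from y)].
Proof.
move=> fG /fG [n [f [fs [fx fG']]]].
suff : nbhs x [set y | forall i, (i < n)%N -> f i (paths_from y)].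
  by apply: filterS => y /fG'.
elim: n fs fx {fG'} => [|n IH] fs fx; first by apply: filterS filterT.
apply: filterS (filterI (IH (fun i ik => fs i (ltnW ik)) (fun i ik => fx i (ltnW ik)))
  (fell_sub_nbhs (fs n (ltnSn n)) (fx n (ltnSn n)))) => y [H1 H2] i.
by rewrite ltnS leq_eqVlt => /orP [/eqP -> // | /H1].
Qed.

Lemma open_paths_from W : open W <-> bdry_open mul P dom act (paths_from @` W).
Proof.
split.
  move=> oW; split; first by move=> _ [x _ <-]; exact: paths_from_bdry.
  pose WQ := (fun l : LT X Q => l.1) @^-1` W.
  pose G := [set A | A `&` (WQ `&` Lam) !=set0].
  exists G; split.
    move=> A HA; exists 1%N, (fun=> G); split; last by split => [i _ | B /(_ 0%N isT)].
    move=> i _; right; exists WQ; split => //.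
    by apply: open_comp => // l _; exact: continuous_LT_fst.
  apply/seteqP; split.
    move=> _ [x Wx <-]; split; last exact: paths_from_bdry.
    by exists (x, e); split; [exact: paths_from_e | split].
  move=> A [[l [Al [WQl _]]] /bdry_paths_from [x Ex]]; subst A.
  by exists x => //; case: Al => _ <-.
case=> _ [G [fG EG]]; rewrite openE => x Wx.
have Gx : G (paths_from x) by move: (EG) => /seteqP [/(_ _ (imageP _ Wx)) []].
apply: filterS (fell_open_nbhs fG Gx) => y Gy.
have : (paths_from @` W) (paths_from y) by rewrite EG; split=> //; exact: paths_from_bdry.
by case=> w Ww /paths_from_inj <-.
Qed.

Definition paths_from3 (g : X * Q * X) : set (LT X Q) * Q * set (LT X Q) :=
  let '(x, q, y) := g in (paths_from x, q, paths_from y).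

Local Notation GX := (Gset mul inv P [set: X] dom act).
Local Notation GB := (Gset mul inv P Bdry bdom pshift).
Local Notation ZB := (Zbasic mul inv bdom pshift).

Lemma Gset_paths_from3 x q y : GB (paths_from3 (x, q, y)) <-> GX (x, q, y).
Proof.
split.
  case=> _ [_ [m [n [Pm [Pn [-> [dm [dn E]]]]]]]].
  have [dm' dn' E'] := proj1 (paths_from_match x y m n) (And3 dm dn E).
  by do 2 split => //; exists m, n.
case=> _ [_ [m [n [Pm [Pn [-> [dm [dn E]]]]]]]].
have [dm' dn' E'] := proj2 (paths_from_match x y m n) (And3 dm dn E).
by split; [|split]; try exact: paths_from_bdry; exists m, n.
Qed.

Lemma Zbasic_paths_from3 U V m n x q y :
  ZB (paths_from @` U) m n (paths_from @` V) (paths_from3 (x, q, y)) <->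
  Zbasic mul inv dom act U m n V (x, q, y).
Proof.
split.
  case=> [[x' Ux' /paths_from_inj ex] [[y' Vy' /paths_from_inj ey] [-> [dm [dn E]]]]].
  subst x' y'; have [dm' dn' E'] := proj1 (paths_from_match x y m n) (And3 dm dn E).
  by do ?split.
move=> [Ux [Vy [-> [dm [dn E]]]]].
rewrite /=; have [dm' dn' E'] := proj2 (paths_from_match x y m n) (And3 dm dn E).
split; first by exists x.
by split; first by exists y.
Qed.

Lemma Gopen_paths_from3 W : W `<=` GX ->
  Gopen mul inv P [set: X] dom act open W ->
  Gopen mul inv P Bdry bdom pshift (bdry_open mul P dom act) (paths_from3 @` W).
Proof.
move=> WG [_ HW]; split.
  by move=> _ [[[x q] y] Wg <-]; exact/Gset_paths_from3/WG.
move=> _ [[[x q] y] Wg <-].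
have [U [V [m [n [oU [oV [Pm [Pn [Zg ZW]]]]]]]]] := HW _ Wg.
exists (paths_from @` U), (paths_from @` V), m, n.
do 4 (split; first by rewrite -?open_paths_from).
split; first exact/Zbasic_paths_from3.
move=> [[A q'] B] HZ; case: (HZ) => [[x' _ eA] [[y' _ eB] _]]; subst A B.
by exists (x', q', y') => //; apply/ZW/Zbasic_paths_from3.
Qed.

Lemma Gopen_paths_from3_inv W : W `<=` GX ->
  Gopen mul inv P Bdry bdom pshift (bdry_open mul P dom act) (paths_from3 @` W) ->
  Gopen mul inv P [set: X] dom act open W.
Proof.
move=> WG [_ HB]; split => // -[[x q] y] Wg.
have [U' [V' [m [n [oU' [oV' [Pm [Pn [Z ZW]]]]]]]]] := HB _ (imageP _ Wg).
have eU := image_preimage_paths_from oU'.1.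
have eV := image_preimage_paths_from oV'.1.
exists (paths_from @^-1` U'), (paths_from @^-1` V'), m, n.
split; first by apply/open_paths_from; rewrite eU.
split; first by apply/open_paths_from; rewrite eV.
split => //; split => //.
split; first by apply/Zbasic_paths_from3; rewrite eU eV.
move=> [[x' q'] y'] /Zbasic_paths_from3; rewrite eU eV => /ZW.
by case=> -[[a b] c] Wg' [/paths_from_inj ea eb /paths_from_inj ec]; subst.
Qed.

End PathsFrom.

Unset Implicit Arguments. Set Strict Implicit.

Theorem proposition6p20
  (Q : choiceType) (mul : Q -> Q -> Q) (inv : Q -> Q) (e : Q)
  (hQ : is_group mul inv e)
  (P : set Q) (hP : is_submonoid mul e P)
  (hqlo : quasi_lattice_ordered mul inv e P)
  (X : topologicalType) (dom : X -> Q -> Prop) (act : X -> Q -> X)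
  (hact : is_partial_action mul e P dom act)
  (hdir : directed_action mul P dom)
  (hlc : locally_compact_action P dom act) :
  exists J : X -> set (LT X Q),
    (* J is a homeomorphism of X onto the boundary path space *)
    (forall x, Bdry mul P dom act (J x)) /\
    injective J /\
    (forall A, Bdry mul P dom act A -> exists x, J x = A) /\
    (forall W : set X, open W <-> bdry_open mul P dom act (J @` W)) /\
    (* P-equivariance *)
    (forall x m, dom x m ->
       pshift mul P dom act (J x) m !=set0 /\
       J (act x m) = pshift mul P dom act (J x) m) /\
    (* (x,q,y) |-> (J x, q, J y) is an isomorphism of topological groupoids *)
    let GX := Gset mul inv P [set: X] dom act in
    let GB := Gset mul inv P (Bdry mul P dom act) (bdom mul P dom act)
                (pshift mul P dom act) in
    let Phi := fun g : X * Q * X => let '(x, q, y) := g in (J x, q, J y) in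
    (forall g, GX g -> GB (Phi g)) /\
    {in GX &, injective Phi} /\
    (forall h, GB h -> exists g, GX g /\ Phi g = h) /\
    (forall g h, GX g -> GX h -> g.2 = h.1.1 ->
       Phi (gmul mul g h) = gmul mul (Phi g) (Phi h)) /\
    (forall g, GX g -> Phi (ginv inv g) = ginv inv (Phi g)) /\
    (forall W, W `<=` GX ->
       (Gopen mul inv P [set: X] dom act open W <->
        Gopen mul inv P (Bdry mul P dom act) (bdom mul P dom act)
          (pshift mul P dom act) (bdry_open mul P dom act) (Phi @` W))).
Proof.
have mul1q : left_id e mul by move=> a; case: hQ => _ [/(_ a) []].
have J_inj := paths_from_inj hP hact.
have J_surj := bdry_paths_from mul1q hP hact hdir hlc.
have GJ := Gset_paths_from3 inv hP hact hdir hlc.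
exists (paths_from P dom).
split; first exact: (paths_from_bdry hP hact hdir hlc).
do 2 (split => //); split; first exact: (open_paths_from mul1q hP hact hdir hlc).
split.
  move=> x m dm; rewrite (pshift_paths_from hP hact dm).
  by split => //; exists (act x m, e); exact: (paths_from_e hP hact).
move=> GX GB Phi.
have Phi_inj : injective Phi.
  by move=> [[x q] y] [[x' q'] y'] [/J_inj -> -> /J_inj ->].
split; first by move=> [[x q] y] /GJ.
split; first by move=> g h _ _; exact: Phi_inj.
split.
  move=> [[A q] B] GBh; have [BA [BB _]] := GBh.
  have [x ex] := J_surj _ BA; have [y ey] := J_surj _ BB; subst A B.
  by exists (x, q, y); split => //; exact/GJ.
split; first by move=> [[x q] y] [[x' q'] y'].
split; first by move=> [[x q] y].
move=> W WG; split.
  exact: (Gopen_paths_from3 mul1q hP hact hdir hlc WG).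
exact: (Gopen_paths_from3_inv mul1q hP hact hdir hlc WG).
Qed.
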